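(* Let $G$ be a group with a regular gliding system such that there is an upper bound on the cardinality of sets of pairwise independent glides, and suppose $G$ (as a subset of itself) is oriented. Then for every $A\in G$ the typing homomorphism $\mu_A:\pi_1(X_G,A)\to\mathcal{A}(G)$ is injective.
   Context: Gliding system $(\mathcal{G},\mathcal{I})$ in $G$: $\mathcal{G}\subset G\setminus\{1\}$ closed under inversion (glides), $\mathcal{I}\subset\mathcal{G}\times\mathcal{G}$ (independence) with $(s^{-1},t),(t,s)\in\mathcal{I}$ and $st=ts\ne1$ whenever $(s,t)\in\mathcal{I}$; regular if every finite set of pairwise independent glides $S$ is cubic, i.e. $\prod_{t\in T_1}t\ne\prod_{t\in T_2}t$ for distinct $T_1,T_2\subset S$. Glide complex $X_G$: cubed complex with one $k$-cube for each equivalence class of based cubes $(A,S)$ ($A\in G$, $S$ cubic of size $k$) under $(A,S)\sim([T]A,(S\setminus T)\cup\{t^{-1}:t\in T\})$, where $[T]=\prod_{t\in T}t$; vertices $[T]A$, faces cubes of $(A,S')$, $S'\subset S$; 1-cells join $A$ and $sA$. $\mathcal{A}(G)$: right-angled Artin group with generators $g_s$ ($s\in\mathcal{G}$), relations $g_sg_t=g_tg_s$ for $(s,t)\in\mathcal{I}$. An orientation of $G$ directs every 1-cell of $X_G$ so that in every square with vertices $A,sA,tA,stA$ the 1-cells $A$–$sA$ and $tA$–$stA$ are both directed towards $sA,stA$ or both towards $A,tA$ (and likewise with $s,t$ exchanged). For a directed 1-cell $e$ from $A$ to $B$, $|e|=BA^{-1}$. For an edge path through $e_1,\dots,e_n$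 with $\nu_k=\pm1$ according to whether $e_k$ is traversed along or against its orientation, $\mu=g_{|e_1|}^{\nu_1}\cdots g_{|e_n|}^{\nu_n}$; on loops at $A$ this gives the typing homomorphism $\mu_A$. *)

From Stdlib Require Import List Bool Arith.
Import ListNotations.
Set Implicit Arguments.

Record Group := {
  carrier :> Type;
  gmul : carrier -> carrier -> carrier;
  ginv : carrier -> carrier;
  gone : carrier;
  gmulA : forall a b c, gmul a (gmul b c) = gmul (gmul a b) c;
  gmul1l : forall a, gmul gone a = a;
  gmul1r : forall a, gmul a gone = a;
  gmulVl : forall a, gmul (ginv a) a = gone;
  gmulVr : forall a, gmul a (ginv a) = gone }.

Arguments gmul {g}. Arguments ginv {g}. Arguments gone {g}.

Record GlidingSystem (G : Group) := {
  glide : G -> Prop;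
  indep : G -> G -> Prop;
  glide_neq1 : forall s, glide s -> s <> gone;
  glide_inv : forall s, glide s -> glide (ginv s);
  indep_glide : forall s t, indep s t -> glide s /\ glide t;
  indep_invl : forall s t, indep s t -> indep (ginv s) t;
  indep_sym : forall s t, indep s t -> indep t s;
  indep_comm : forall s t, indep s t -> gmul s t = gmul t s;
  indep_prod_neq1 : forall s t, indep s t -> gmul s t <> gone }.

Arguments glide {G}. Arguments indep {G}.

Section Defs.
Variable G : Group.
Variable GS : GlidingSystem G.

Definition gprod (l : list G) : G := fold_right gmul gone l.

Fixpoint maskl (m : list bool) (l : list G) : list G :=
  match m, l with
  | b :: m', x :: l' => if b then x :: maskl m' l' else maskl m' l'
  | _, _ => []
  end.

Definition pw_indep (S : list G) : Prop :=
  NoDup S /\ (forall s, In s S -> glide GS s) /\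
  (forall s t, In s S -> In t S -> s <> t -> indep GS s t).

(* cubic: distinct subsets (masks) have distinct products *)
Definition cubic (S : list G) : Prop :=
  pw_indep S /\
  forall m1 m2, length m1 = length S -> length m2 = length S -> m1 <> m2 ->
    gprod (maskl m1 S) <> gprod (maskl m2 S).

Definition regular : Prop := forall S, pw_indep S -> cubic S.

Definition bounded_indep : Prop :=
  exists N, forall S, pw_indep S -> length S <= N.

(* 1-cells of X_G: A -- B with B A^{-1} a glide (i.e. B = sA) *)
Definition edge (A B : G) : Prop := glide GS (gmul B (ginv A)).

(* orientation: dir A B = true means the 1-cell A--B is directed from A to B *)
Definition orientation (dir : G -> G -> bool) : Prop :=
  (forall A B, dir A B = true -> edge A B) /\
  (forall A B, edge A B -> dir A B = negb (dir B A)) /\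
  (forall A s t, cubic [s; t] ->
     (dir A (gmul s A) = dir (gmul t A) (gmul s (gmul t A))) /\
     (dir A (gmul t A) = dir (gmul s A) (gmul t (gmul s A)))).

(* edge path from A visiting the vertices of l in order *)
Fixpoint epath (A : G) (l : list G) : Prop :=
  match l with
  | [] => True
  | B :: l' => edge A B /\ epath B l'
  end.

Definition eloop (A : G) (l : list G) : Prop := epath A l /\ last l A = A.

(* words in the generators g_s (s, true) and g_s^{-1} (s, false) *)
Fixpoint mu (dir : G -> G -> bool) (A : G) (l : list G) : list (G * bool) :=
  match l with
  | [] => []
  | B :: l' =>
      (if dir A B then (gmul B (ginv A), true) else (gmul A (ginv B), false))
        :: mu dir B l'
  end.

Inductive raag_eq : list (G * bool) -> list (G * bool) -> Prop :=
  | raag_refl w : raag_eq w w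
  | raag_sym w1 w2 : raag_eq w1 w2 -> raag_eq w2 w1
  | raag_trans w1 w2 w3 : raag_eq w1 w2 -> raag_eq w2 w3 -> raag_eq w1 w3
  | raag_free u v s b : raag_eq (u ++ (s, b) :: (s, negb b) :: v) (u ++ v)
  | raag_comm u v s t b c : indep GS s t ->
      raag_eq (u ++ (s, b) :: (t, c) :: v) (u ++ (t, c) :: (s, b) :: v).

(* homotopy of edge paths (given as full vertex sequences) in X_G:
   generated by backtracking and pushing across 2-cells (squares) *)
Inductive htpy : list G -> list G -> Prop :=
  | htpy_refl p : htpy p p
  | htpy_sym p q : htpy p q -> htpy q p
  | htpy_trans p q r : htpy p q -> htpy q r -> htpy p r
  | htpy_back u x v w : edge v w ->
      htpy (u ++ v :: w :: v :: x) (u ++ v :: x)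
  | htpy_square u x v s t : cubic [s; t] ->
      htpy (u ++ v :: gmul s v :: gmul s (gmul t v) :: x)
           (u ++ v :: gmul t v :: gmul s (gmul t v) :: x).

End Defs.
Arguments mu {G}.
Arguments gprod {G}.
Arguments maskl {G}.

From Stdlib Require Import List Arith Lia Bool Relations Classical.
Import ListNotations.

(* A word reduces by swapping two adjacent letters with
      independent glides and by deleting an adjacent pair x x^-1.  This
      reduction is confluent, so words equal in A(G) have a common reduct
      ([raag_eq_joinable]).  The proof is Newman's lemma modulo swaps: a
      cancellation transported across swaps becomes a "distant cancellation"
      of x ... x^-1 over letters commuting with x ([far_cancel_shuffle]); a
      distant and an adjacent cancellation have a common reduct
      ([far_cancel_cancel]); induction on word length concludes.
   2. Lifting.  Every reduction of the word of a path is the word of a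
      homotopic path ([lift_reduces]): a swap is a push across a square --
      regularity makes the two glides cubic and the orientation makes the far
      sides of the square carry the swapped letters -- and a cancellation is a
      backtrack.  A path is determined by its start and word ([mu_injective]).
   Hence both loops are homotopic to the same path. *)

Ltac case_idx := repeat (match goal with
 | |- context [Nat.ltb ?a ?b] =>
     lazymatch a with context [if _ then _ else _] => fail | _ => idtac end;
     lazymatch b with context [if _ then _ else _] => fail | _ => idtac end;
     destruct (Nat.ltb_spec a b)
 | |- context [Nat.eqb ?a ?b] =>
     lazymatch a with context [if _ then _ else _] => fail | _ => idtac end;
     lazymatch b with context [if _ then _ else _] => fail | _ => idtac end;
     destruct (Nat.eqb_spec a b)
 end; cbv beta iota).

Section Reindexing.
Context {X : Type} (d : X).

(* All rearrangements of words below are of this form,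
   so identities between them reduce to arithmetic on indices. *)
Definition reindex (n : nat) (f : nat -> nat) (w : list X) : list X :=
  map (fun k => nth (f k) w d) (seq 0 n).

Lemma reindex_length n f w : length (reindex n f w) = n.
Proof. unfold reindex; rewrite length_map, length_seq; auto. Qed.

Lemma reindex_nth n f w k : k < n -> nth k (reindex n f w) d = nth (f k) w d.
Proof.
  intros Hk; unfold reindex.
  rewrite (nth_indep _ d (nth (f 0) w d)) by (rewrite length_map, length_seq; auto).
  rewrite (map_nth (fun k => nth (f k) w d) (seq 0 n) 0 k), seq_nth by lia; auto.
Qed.

Lemma reindex_ext n n' f g w w' : n = n' ->
  (forall k, k < n -> nth (f k) w d = nth (g k) w' d) ->
  reindex n f w = reindex n' g w'.
Proof.
  intros <- H; unfold reindex; apply map_ext_in; intros a Ha.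
  apply in_seq in Ha; apply H; lia.
Qed.

Lemma reindex_reindex n m f g w : (forall k, k < n -> f k < m) ->
  reindex n f (reindex m g w) = reindex n (fun k => g (f k)) w.
Proof. intros H; apply reindex_ext; auto; intros; rewrite reindex_nth; auto. Qed.

Lemma reindex_id w : reindex (length w) (fun k => k) w = w.
Proof.
  apply nth_ext with d d; rewrite ?reindex_length; auto.
  intros; rewrite reindex_nth; auto.
Qed.

Definition swap_at k w := reindex (length w)
  (fun n => if n =? k then k + 1 else if n =? k + 1 then k else n) w.
(* Delete positions [i < j]. *)
Definition del2 i j w := reindex (length w - 2)
  (fun n => if n <? i then n else if n <? j - 1 then n + 1 else n + 2) w.
Definition del1 p w := reindex (length w - 1) (fun n => if n <? p then n else n + 1) w.
(* Move the entry at position [p] to position [q >= p], shifting the entries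
   in between one step to the left. *)
Definition move_to p q w := reindex (length w)
  (fun n => if n <? p then n else if n <? q then n + 1 else if n =? q then p else n) w.

Lemma nth_app_split u v n : nth n (u ++ v) d =
  if n <? length u then nth n u d else nth (n - length u) v d.
Proof. case_idx; [rewrite app_nth1 | rewrite app_nth2]; auto; lia. Qed.

Lemma nth_app_pair u a b v n : nth n (u ++ a :: b :: v) d =
  if n <? length u then nth n u d else if n =? length u then a
  else if n =? length u + 1 then b else nth (n - length u - 2) v d.
Proof.
  rewrite nth_app_split; case_idx; try lia; auto.
  - subst n; rewrite Nat.sub_diag; auto.
  - subst n; replace (length u + 1 - length u) with 1 by lia; auto.
  - replace (n - length u) with (S (S (n - length u - 2))) at 1 by lia; auto.
Qed.

Lemma swap_at_app u a b v : swap_at (length u) (u ++ a :: b :: v) = u ++ b :: a :: v.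
Proof.
  apply nth_ext with d d; unfold swap_at; rewrite ?reindex_length, ?length_app; auto.
  intros n Hn; rewrite reindex_nth, !nth_app_pair by auto.
  case_idx; try lia; auto; f_equal; lia.
Qed.

Lemma del2_app u a b v : del2 (length u) (length u + 1) (u ++ a :: b :: v) = u ++ v.
Proof.
  apply nth_ext with d d; unfold del2; rewrite ?reindex_length, ?length_app; simpl; try lia.
  intros n Hn; rewrite reindex_nth by (simpl in *; lia).
  rewrite nth_app_pair, nth_app_split; case_idx; try lia; auto; f_equal; lia.
Qed.

Lemma nth_pair_fst u a b v : nth (length u) (u ++ a :: b :: v) d = a.
Proof. rewrite nth_app_pair; case_idx; lia || auto. Qed.

Lemma nth_pair_snd u a b v : nth (length u + 1) (u ++ a :: b :: v) d = b.
Proof. rewrite nth_app_pair; case_idx; lia || auto. Qed.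

Lemma split_pair k (w : list X) : k + 1 < length w ->
  exists u x y v, w = u ++ x :: y :: v /\ length u = k.
Proof.
  revert w; induction k as [|k IH]; intros [|a [|b w]] H; simpl in *; try lia.
  - exists [], a, b, w; auto.
  - destruct (IH (b :: w)) as (u & x & y & v & E & L); [simpl; lia|].
    exists (a :: u), x, y, v; rewrite E; simpl; auto.
Qed.

End Reindexing.

Ltac reindex_eq := unfold swap_at, del2, del1, move_to in *; rewrite ?reindex_length;
  repeat (rewrite reindex_reindex
            by (let k := fresh in let Hk := fresh in intros k Hk; case_idx; lia));
  apply reindex_ext; [lia | let k := fresh in let Hk := fresh in
                             intros k Hk; case_idx; try lia; try (f_equal; lia)].

Lemma swap_at_swap_at {X} (d : X) k w : k + 1 < length w -> swap_at d k (swap_at d k w) = w.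
Proof. intros; rewrite <- (reindex_id d w) at 2; reindex_eq. Qed.

Ltac simpl_nth := repeat (rewrite reindex_nth by (rewrite ?reindex_length; lia)); cbv beta.

Section WordProblem.
Variable G : Group.
Variable GS : GlidingSystem G.

Local Notation letter := (carrier G * bool)%type.

Definition dummy : letter := (gone, true).
Definition inverse (x : letter) : letter := (fst x, negb (snd x)).
Definition commuting (x y : letter) : Prop := indep GS (fst x) (fst y).

Lemma inverse_involutive x : inverse (inverse x) = x.
Proof. destruct x; unfold inverse; simpl; rewrite negb_involutive; auto. Qed.

Lemma inverse_inj x y : inverse x = inverse y -> x = y.
Proof. intros H; rewrite <- (inverse_involutive x), H, inverse_involutive; auto. Qed.

Lemma commuting_sym x y : commuting x y -> commuting y x.
Proof. apply indep_sym. Qed.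

Lemma commuting_inverse x y : commuting x y -> commuting (inverse x) y.
Proof. auto. Qed.

Definition swappable (w : list letter) k : Prop :=
  k + 1 < length w /\ commuting (nth k w dummy) (nth (k + 1) w dummy).

Definition cancellable (w : list letter) i j : Prop :=
  i < j /\ j < length w /\ nth j w dummy = inverse (nth i w dummy) /\
  forall m, i < m -> m < j -> commuting (nth i w dummy) (nth m w dummy).

Definition swap_step w w' : Prop := exists k, swappable w k /\ w' = swap_at dummy k w.
Definition cancel_step w w' : Prop :=
  exists i, cancellable w i (i + 1) /\ w' = del2 dummy i (i + 1) w.
Definition far_cancel w w' : Prop := exists i j, cancellable w i j /\ w' = del2 dummy i j w.

Definition reduce_step w w' : Prop := swap_step w w' \/ cancel_step w w'.
Definition reduces : relation (list letter) := clos_refl_trans _ reduce_step.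
Definition shuffle : relation (list letter) := clos_refl_trans _ swap_step.
Definition joinable w1 w2 : Prop := exists v, reduces w1 v /\ reduces w2 v.

Lemma swap_step_sym w w' : swap_step w w' -> swap_step w' w.
Proof.
  intros (k & [Hk Hc] & ->); exists k.
  split; [|rewrite swap_at_swap_at; auto].
  unfold swap_at; split; [rewrite reindex_length; auto|].
  simpl_nth; case_idx; try lia.
  replace (k + 1 + 1) with (k + 2) by lia; apply commuting_sym; auto.
Qed.

Lemma shuffle_sym w w' : shuffle w w' -> shuffle w' w.
Proof.
  induction 1; [apply rt_step, swap_step_sym; auto | apply rt_refl |
                eapply rt_trans; eauto].
Qed.

Lemma shuffle_reduces w w' : shuffle w w' -> reduces w w'.
Proof.
  induction 1; [apply rt_step; left; auto | apply rt_refl | eapply rt_trans; eauto].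
Qed.

Lemma shuffle_length w w' : shuffle w w' -> length w' = length w.
Proof.
  induction 1 as [w w' (k & _ & ->)| |]; try congruence.
  unfold swap_at; apply reindex_length.
Qed.

Lemma cancel_step_length w w' :
  cancel_step w w' -> length w' = length w - 2 /\ 2 <= length w.
Proof. intros (k & (_ & Hk & _) & ->); unfold del2; rewrite reindex_length; lia. Qed.

Lemma cancel_reduces w i : cancellable w i (i + 1) -> reduces w (del2 dummy i (i + 1) w).
Proof. intros H; apply rt_step; right; exists i; auto. Qed.

(* A distant cancellation is a sequence of swaps bringing the inverse letter
   next to its partner, followed by an adjacent cancellation. *)
Lemma far_cancel_reduces w i j : cancellable w i j -> reduces w (del2 dummy i j w).
Proof.
  remember (j - i) as n eqn:En; revert w i j En.
  induction n as [|n IH]; intros w i j En (Hij & Hj & Hx & Hb); [lia|].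
  destruct (Nat.eq_dec j (i + 1)) as [->|Hne].
  { apply cancel_reduces; repeat split; auto; lia. }
  assert (Hs : swap_step w (swap_at dummy (j - 1) w)).
  { exists (j - 1); repeat split; try lia. replace (j - 1 + 1) with j by lia.
    rewrite Hx; apply commuting_sym, commuting_inverse, Hb; lia. }
  eapply rt_trans; [apply rt_step; left; exact Hs|].
  replace (del2 dummy i j w) with (del2 dummy i (j - 1) (swap_at dummy (j - 1) w))
    by reindex_eq.
  apply (IH _ i (j - 1)); [lia|]; repeat split; unfold swap_at;
    rewrite ?reindex_length; try lia.
  - simpl_nth; case_idx; try lia; replace (j - 1 + 1) with j by lia; auto.
  - intros m H1 H2; simpl_nth; case_idx; try lia; apply Hb; lia.
Qed.

Lemma cancel_swap_disjoint y i j k : cancellable y i j -> swappable y k ->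
  k + 1 < i \/ (i < k /\ k + 1 < j) \/ j < k ->
  cancellable (swap_at dummy k y) i j /\
  swap_step (del2 dummy i j y) (del2 dummy i j (swap_at dummy k y)).
Proof.
  intros (Hij & Hj & Hx & Hb) [Hk Hc] Hdis; split.
  - repeat split; unfold swap_at; rewrite ?reindex_length; try lia.
    + simpl_nth; case_idx; try lia; auto.
    + intros m H1 H2; simpl_nth; case_idx; try lia; apply Hb; lia.
  - destruct Hdis as [H|[H|H]]; [exists k | exists (k - 1) | exists (k - 2)];
      (split; [split|reindex_eq]);
      unfold del2; rewrite ?reindex_length; try lia; simpl_nth; case_idx; try lia;
      match goal with |- commuting (nth ?a _ _) (nth ?b _ _) =>
        replace a with k by lia; replace b with (k + 1) by lia; exact Hc end.
Qed.

Lemma cancel_swap_overlap y i j k : cancellable y i j -> swappable y k ->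
  k = i \/ k + 1 = i \/ k = j \/ k + 1 = j ->
  exists i' j', cancellable (swap_at dummy k y) i' j' /\
    del2 dummy i' j' (swap_at dummy k y) = del2 dummy i j y.
Proof.
  intros (Hij & Hj & Hx & Hb) [Hk Hc] Hov.
  assert (Hlen : length (swap_at dummy k y) = length y) by apply reindex_length.
  destruct (Nat.eq_dec k i) as [->|Hki];
    [destruct (Nat.eq_dec j (i + 1)) as [->|Hji] | destruct Hov as [?|[<-|[->|<-]]]];
    try lia;
    [exists i, (i + 1) | exists (i + 1), j | exists k, j | exists i, (j + 1) | exists i, k];
    (split; [|reindex_eq]); repeat split; rewrite ?Hlen; try lia;
    try (intros m H1 H2); unfold swap_at; simpl_nth; case_idx; try lia;
    try (apply Hb; lia); auto.
  - (* the swapped letters are x and x^-1 themselves *)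
    rewrite Hx, inverse_involutive; auto.
  - (* x moves one step left *)
    apply commuting_sym; auto.
  - (* x^-1 moves one step right, across a letter commuting with it *)
    rewrite Hx in Hc; exact Hc.
Qed.

Lemma far_cancel_swap y y' z : far_cancel y y' -> swap_step y z ->
  exists z', far_cancel z z' /\ shuffle y' z'.
Proof.
  intros (i & j & Hcan & ->) (k & Hsw & ->).
  assert (Hij : i < j) by apply Hcan.
  assert (Hcase : (k + 1 < i \/ (i < k /\ k + 1 < j) \/ j < k) \/
                  (k = i \/ k + 1 = i \/ k = j \/ k + 1 = j)) by lia.
  destruct Hcase as [Hdis|Hov].
  - destruct (cancel_swap_disjoint _ _ _ _ Hcan Hsw Hdis) as [Hc Hs].
    eexists; split; [exists i, j; split; [exact Hc | reflexivity] |
                     apply rt_step; exact Hs].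
  - destruct (cancel_swap_overlap _ _ _ _ Hcan Hsw Hov) as (i' & j' & Hc & E).
    eexists; split; [exists i', j'; split; [exact Hc | reflexivity] |
                     rewrite E; apply rt_refl].
Qed.

Lemma far_cancel_shuffle y x : shuffle y x -> forall y', far_cancel y y' ->
  exists x', far_cancel x x' /\ shuffle y' x'.
Proof.
  intros H; apply clos_rt_rt1n in H; induction H as [|y z x Hyz _ IH]; intros y' Hc.
  - exists y'; split; auto; apply rt_refl.
  - destruct (far_cancel_swap _ _ _ Hc Hyz) as (z1 & Hz1 & Hs1).
    destruct (IH _ Hz1) as (z2 & Hz2 & Hs2).
    exists z2; split; auto; eapply rt_trans; eauto.
Qed.

Lemma move_to_shuffle p q s : p <= q -> q < length s ->
  (forall m, p < m -> m <= q -> commuting (nth p s dummy) (nth m s dummy)) ->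
  shuffle s (move_to dummy p q s).
Proof.
  remember (q - p) as n eqn:En; revert p q s En.
  induction n as [|n IH]; intros p q s En Hpq Hq Hc.
  - replace (move_to dummy p q s) with s; [apply rt_refl|].
    rewrite <- (reindex_id dummy s) at 1; reindex_eq.
  - assert (Hs : swap_step s (swap_at dummy p s))
      by (exists p; repeat split; try lia; apply Hc; lia).
    eapply rt_trans; [apply rt_step; exact Hs|].
    replace (move_to dummy p q s) with (move_to dummy (p + 1) q (swap_at dummy p s))
      by reindex_eq.
    apply IH; unfold swap_at; rewrite ?reindex_length; try lia.
    intros m H1 H2; simpl_nth; case_idx; try lia; apply Hc; lia.
Qed.

Lemma del1_shuffle t p q : p < q -> q < length t -> nth p t dummy = nth q t dummy ->
  (forall n, p < n -> n < q -> commuting (nth p t dummy) (nth n t dummy)) ->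
  shuffle (del1 dummy q t) (del1 dummy p t).
Proof.
  intros Hpq Hq He Hc.
  replace (del1 dummy p t) with (move_to dummy p (q - 1) (del1 dummy q t)).
  - apply move_to_shuffle; unfold del1; rewrite ?reindex_length; try lia.
    intros m H1 H2; simpl_nth; case_idx; try lia; apply Hc; lia.
  - reindex_eq; subst; replace (q - 1 + 1) with q by lia; auto.
Qed.

Lemma cancel_cancel_disjoint x i j k : cancellable x i j -> cancellable x k (k + 1) ->
  k + 1 < i \/ (i < k /\ k + 1 < j) \/ j < k ->
  joinable (del2 dummy i j x) (del2 dummy k (k + 1) x).
Proof.
  intros (Hij & Hj & Hx & Hb) (_ & Hk & Hy & _) [H|[H|H]].
  - exists (del2 dummy (i - 2) (j - 2) (del2 dummy k (k + 1) x)); split.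
    + replace (del2 dummy (i - 2) (j - 2) (del2 dummy k (k + 1) x))
        with (del2 dummy k (k + 1) (del2 dummy i j x)) by reindex_eq.
      apply cancel_reduces; repeat split; unfold del2; rewrite ?reindex_length; try lia.
      simpl_nth; case_idx; try lia; auto.
    + apply far_cancel_reduces.
      repeat split; unfold del2; rewrite ?reindex_length; try lia.
      * simpl_nth; case_idx; try lia.
        replace (j - 2 + 2) with j by lia; replace (i - 2 + 2) with i by lia; auto.
      * intros m H1 H2; simpl_nth; case_idx; try lia.
        replace (i - 2 + 2) with i by lia; apply Hb; lia.
  - exists (del2 dummy i (j - 2) (del2 dummy k (k + 1) x)); split.
    + replace (del2 dummy i (j - 2) (del2 dummy k (k + 1) x))
        with (del2 dummy (k - 1) (k - 1 + 1) (del2 dummy i j x)) by reindex_eq.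
      apply cancel_reduces; repeat split; unfold del2; rewrite ?reindex_length; try lia.
      simpl_nth; case_idx; try lia.
      replace (k - 1 + 1 + 1) with (k + 1) by lia; replace (k - 1 + 1) with k by lia; auto.
    + apply far_cancel_reduces.
      repeat split; unfold del2; rewrite ?reindex_length; try lia.
      * simpl_nth; case_idx; try lia; replace (j - 2 + 2) with j by lia; auto.
      * intros m H1 H2; simpl_nth; case_idx; try lia; apply Hb; lia.
  - exists (del2 dummy i j (del2 dummy k (k + 1) x)); split.
    + replace (del2 dummy i j (del2 dummy k (k + 1) x))
        with (del2 dummy (k - 2) (k - 2 + 1) (del2 dummy i j x)) by reindex_eq.
      apply cancel_reduces; repeat split; unfold del2; rewrite ?reindex_length; try lia.
      simpl_nth; case_idx; try lia.
      replace (k - 2 + 1 + 2) with (k + 1) by lia; replace (k - 2 + 2) with k by lia; auto.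
    + apply far_cancel_reduces.
      repeat split; unfold del2; rewrite ?reindex_length; try lia.
      * simpl_nth; case_idx; try lia; auto.
      * intros m H1 H2; simpl_nth; case_idx; try lia; apply Hb; lia.
Qed.

(* When the two cancellations share a letter, their results differ only by
   which of two equal letters was deleted, hence are shuffle-equivalent. *)
Lemma cancel_cancel_overlap x i j k : cancellable x i j -> cancellable x k (k + 1) ->
  k + 1 = i \/ k = i \/ k + 1 = j \/ k = j ->
  joinable (del2 dummy i j x) (del2 dummy k (k + 1) x).
Proof.
  intros (Hij & Hj & Hx & Hb) (_ & Hk & Hy & _) Hov.
  destruct Hov as [<- | [-> | [<- | <-]]].
  - exists (del2 dummy k (k + 1) x); split; [|apply rt_refl]; apply shuffle_reduces.
    replace (del2 dummy (k + 1) j x) with (del1 dummy (j - 1) (del1 dummy (k + 1) x))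
      by reindex_eq.
    replace (del2 dummy k (k + 1) x) with (del1 dummy k (del1 dummy (k + 1) x))
      by reindex_eq.
    apply del1_shuffle; unfold del1; rewrite ?reindex_length; try lia.
    + simpl_nth; case_idx; try lia; replace (j - 1 + 1) with j by lia.
      rewrite Hx, Hy, inverse_involutive; auto.
    + intros n Hn1 Hn2; simpl_nth; case_idx; try lia.
      replace (nth k x dummy) with (inverse (nth (k + 1) x dummy))
        by (rewrite Hy, inverse_involutive; auto).
      apply commuting_inverse, Hb; lia.
  - destruct (Nat.eq_dec j (i + 1)) as [->|Hji].
    { exists (del2 dummy i (i + 1) x); split; apply rt_refl. }
    exists (del2 dummy i (i + 1) x); split; [|apply rt_refl]; apply shuffle_reduces.
    replace (del2 dummy i j x) with (del1 dummy (j - 1) (del1 dummy i x)) by reindex_eq.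
    replace (del2 dummy i (i + 1) x) with (del1 dummy i (del1 dummy i x)) by reindex_eq.
    apply del1_shuffle; unfold del1; rewrite ?reindex_length; try lia.
    + simpl_nth; case_idx; try lia; replace (j - 1 + 1) with j by lia.
      rewrite Hx, Hy; auto.
    + intros n Hn1 Hn2; simpl_nth; case_idx; try lia.
      rewrite Hy; apply commuting_inverse, Hb; lia.
  - destruct (Nat.eq_dec k i) as [->|Hki].
    { exists (del2 dummy i (i + 1) x); split; apply rt_refl. }
    exists (del2 dummy i (k + 1) x); split; [apply rt_refl|]; apply shuffle_reduces.
    replace (del2 dummy i (k + 1) x) with (del1 dummy i (del1 dummy (k + 1) x))
      by reindex_eq.
    replace (del2 dummy k (k + 1) x) with (del1 dummy k (del1 dummy (k + 1) x))
      by reindex_eq.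
    apply del1_shuffle; unfold del1; rewrite ?reindex_length; try lia.
    + simpl_nth; case_idx; try lia; apply inverse_inj; rewrite <- Hx, Hy; auto.
    + intros n Hn1 Hn2; simpl_nth; case_idx; try lia; apply Hb; lia.
  - exists (del2 dummy i k x); split; [apply rt_refl|]; apply shuffle_reduces.
    replace (del2 dummy i k x) with (del1 dummy i (del1 dummy k x)) by reindex_eq.
    replace (del2 dummy k (k + 1) x) with (del1 dummy k (del1 dummy k x)) by reindex_eq.
    apply del1_shuffle; unfold del1; rewrite ?reindex_length; try lia.
    + simpl_nth; case_idx; try lia; rewrite Hy, Hx, inverse_involutive; auto.
    + intros n Hn1 Hn2; simpl_nth; case_idx; try lia; apply Hb; lia.
Qed.

Lemma far_cancel_cancel x z x' : far_cancel x z -> cancel_step x x' -> joinable z x'.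
Proof.
  intros (i & j & Hc & ->) (k & Hk & ->).
  assert (Hij : i < j) by apply Hc.
  assert (Hcase : (k + 1 < i \/ (i < k /\ k + 1 < j) \/ j < k) \/
                  (k + 1 = i \/ k = i \/ k + 1 = j \/ k = j)) by lia.
  destruct Hcase; [apply cancel_cancel_disjoint | apply cancel_cancel_overlap]; auto.
Qed.

Lemma cancel_step_far w w' : cancel_step w w' -> far_cancel w w'.
Proof. intros (i & Hc & ->); exists i, (i + 1); auto. Qed.

Lemma reduces_first_cancel w a : reduces w a ->
  shuffle w a \/ exists w1 w2, shuffle w w1 /\ cancel_step w1 w2 /\ reduces w2 a.
Proof.
  intros H; apply clos_rt_rt1n in H.
  induction H as [|w y a Hstep Hya IH]; [left; apply rt_refl|].
  destruct Hstep as [Hs|Hc].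
  - destruct IH as [IH|(w1 & w2 & H1 & H2 & H3)].
    + left; eapply rt_trans; [apply rt_step|]; eauto.
    + right; exists w1, w2; repeat split; auto; eapply rt_trans; [apply rt_step|]; eauto.
  - right; exists w, y; repeat split; [apply rt_refl | auto | apply clos_rt1n_rt, Hya].
Qed.

(* Confluence of reduction (Newman's lemma modulo shuffling), by induction on
   the length of the common ancestor: two reductions starting with shuffles
   and cancellations are brought together by moving the first cancellation of
   one across the shuffle of the other and joining the two cancellations. *)
Lemma confluence w a b : reduces w a -> reduces w b -> joinable a b.
Proof.
  remember (length w) as n eqn:En; revert w a b En.
  induction n as [n IH] using lt_wf_ind; intros w a b En Ha Hb; subst n.
  destruct (reduces_first_cancel _ _ Ha) as [Ha'|(w1 & w1' & Hw1 & Hc1 & Hr1)].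
  { exists b; split; [|apply rt_refl].
    eapply rt_trans; [apply shuffle_reduces, shuffle_sym; eauto | auto]. }
  destruct (reduces_first_cancel _ _ Hb) as [Hb'|(x & x' & Hx & Hc2 & Hr2)].
  { exists a; split; [apply rt_refl|].
    eapply rt_trans; [apply shuffle_reduces, shuffle_sym; eauto | auto]. }
  assert (Hw1x : shuffle w1 x) by (eapply rt_trans; [apply shuffle_sym; eauto | auto]).
  destruct (far_cancel_shuffle _ _ Hw1x _ (cancel_step_far _ _ Hc1)) as (z & Hz & Hsz).
  destruct (far_cancel_cancel _ _ _ Hz Hc2) as (v & Hv1 & Hv2).
  pose proof (cancel_step_length _ _ Hc1); pose proof (cancel_step_length _ _ Hc2).
  pose proof (shuffle_length _ _ Hw1); pose proof (shuffle_length _ _ Hx).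
  destruct (IH (length w1') ltac:(lia) w1' a v eq_refl Hr1
              (rt_trans _ _ _ _ _ (shuffle_reduces _ _ Hsz) Hv1)) as (p & Hp1 & Hp2).
  destruct (IH (length x') ltac:(lia) x' b p eq_refl Hr2 (rt_trans _ _ _ _ _ Hv2 Hp2))
    as (q & Hq1 & Hq2).
  exists q; split; auto; eapply rt_trans; eauto.
Qed.

Lemma raag_eq_joinable w1 w2 : raag_eq GS w1 w2 -> joinable w1 w2.
Proof.
  induction 1 as [w|w1 w2 _ [v [H1 H2]]|w1 w2 w3 _ [v1 [H1 H2]] _ [v2 [H3 H4]]
                 |u v s b|u v s t b c Hst].
  - exists w; split; apply rt_refl.
  - exists v; auto.
  - destruct (confluence w2 v1 v2 H2 H3) as (p & Hp1 & Hp2).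
    exists p; split; eapply rt_trans; eauto.
  - exists (u ++ v); split; [|apply rt_refl].
    rewrite <- (del2_app dummy u (s, b) (s, negb b) v).
    apply cancel_reduces; repeat split; rewrite ?length_app; simpl; try lia.
    rewrite !nth_app_pair; case_idx; try lia; auto.
  - exists (u ++ (t, c) :: (s, b) :: v); split; [|apply rt_refl].
    apply rt_step; left; exists (length u); rewrite swap_at_app; split; auto.
    split; [rewrite length_app; simpl; lia|].
    rewrite !nth_app_pair; case_idx; try lia; exact Hst.
Qed.

End WordProblem.

Arguments dummy {G}. Arguments inverse {G}. Arguments commuting {G}.
Arguments reduce_step {G}. Arguments reduces {G}.

Section GroupFacts.
Context {G : Group}.

Lemma gmulK (x y : G) : gmul (gmul x y) (ginv y) = x.
Proof. rewrite <- gmulA, gmulVr, gmul1r; auto. Qed.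

Lemma gmulVK (x y : G) : gmul (gmul x (ginv y)) y = x.
Proof. rewrite <- gmulA, gmulVl, gmul1r; auto. Qed.

Lemma gmulKl (a x : G) : gmul (ginv a) (gmul a x) = x.
Proof. rewrite gmulA, gmulVl, gmul1l; auto. Qed.

Lemma gmulKVl (a x : G) : gmul a (gmul (ginv a) x) = x.
Proof. rewrite gmulA, gmulVr, gmul1l; auto. Qed.

Lemma ginv_unique (a b : G) : gmul a b = gone -> b = ginv a.
Proof. intros H; rewrite <- (gmulKl a b), H, gmul1r; auto. Qed.

Lemma ginv_involutive (a : G) : ginv (ginv a) = a.
Proof. symmetry; apply ginv_unique, gmulVl. Qed.

Lemma ginv_gmul (a b : G) : ginv (gmul a b) = gmul (ginv b) (ginv a).
Proof.
  symmetry; apply ginv_unique.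
  rewrite <- gmulA, (gmulA _ b), gmulVr, gmul1l, gmulVr; auto.
Qed.

(* The group element by which an edge labelled (s, b) moves its source. *)
Definition signed (s : G) (b : bool) : G := if b then s else ginv s.

Lemma signed_cancel (s V : G) b : gmul (signed s (negb b)) (gmul (signed s b) V) = V.
Proof. destruct b; simpl; [apply gmulKl | apply gmulKVl]. Qed.

End GroupFacts.

Lemma last_cons {X} (l : list X) (B a : X) : last (B :: l) a = last l B.
Proof.
  revert B a; induction l as [|c l IH]; intros B a; auto.
  change (last (B :: c :: l) a) with (last (c :: l) a); rewrite !IH; auto.
Qed.

Lemma cons_app_last {X} (A : X) l1 x :
  A :: l1 ++ x = removelast (A :: l1) ++ last l1 A :: x.
Proof.
  rewrite app_comm_cons, (app_removelast_last A (l := A :: l1)) at 1 by discriminate.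
  rewrite last_cons, <- app_assoc; auto.
Qed.

Section Lifting.
Variable G : Group.
Variable GS : GlidingSystem G.
Variable dir : G -> G -> bool.
Hypothesis Hreg : regular GS.
Hypothesis Hor : orientation GS dir.

Local Notation letter := (carrier G * bool)%type.

Definition label (V B : G) : letter :=
  if dir V B then (gmul B (ginv V), true) else (gmul V (ginv B), false).

Lemma mu_cons A B l : mu dir A (B :: l) = label A B :: mu dir B l.
Proof. reflexivity. Qed.

Lemma label_spec V B s b : label V B = (s, b) <-> dir V B = b /\ B = gmul (signed s b) V.
Proof.
  unfold label; destruct (dir V B); split.
  - intros H; inversion H; subst; simpl; rewrite gmulVK; auto.
  - intros [<- ->]; simpl; rewrite gmulK; auto.
  - intros H; inversion H; subst; simpl; rewrite ginv_gmul, ginv_involutive, gmulVK; auto.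
  - intros [<- ->]; simpl; rewrite ginv_gmul, ginv_involutive, gmulKVl; auto.
Qed.

Lemma label_target V B : B = gmul (signed (fst (label V B)) (snd (label V B))) V.
Proof. apply (label_spec V B _ _); destruct (label V B); auto. Qed.

Lemma mu_app A l1 l2 : mu dir A (l1 ++ l2) = mu dir A l1 ++ mu dir (last l1 A) l2.
Proof.
  revert A; induction l1 as [|B l1 IH]; intros A; [reflexivity|].
  rewrite <- app_comm_cons, !mu_cons, IH, last_cons; reflexivity.
Qed.

Lemma mu_length A l : length (mu dir A l) = length l.
Proof. revert A; induction l; intros; simpl; auto. Qed.

Lemma mu_injective A l1 l2 : mu dir A l1 = mu dir A l2 -> l1 = l2.
Proof.
  revert A l2; induction l1 as [|B l1 IH]; intros A [|C l2] H; try discriminate; auto.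
  rewrite !mu_cons in H; injection H as H1 H2.
  assert (E : B = C) by (rewrite (label_target A B), (label_target A C), H1; reflexivity).
  subst C; f_equal; eapply IH; eauto.
Qed.

Lemma epath_app A l1 l2 :
  epath GS A (l1 ++ l2) <-> epath GS A l1 /\ epath GS (last l1 A) l2.
Proof.
  revert A; induction l1 as [|B l1 IH]; intros A; [simpl; tauto|].
  rewrite <- app_comm_cons; cbn [epath]; rewrite IH, last_cons; tauto.
Qed.

Lemma signed_glide s b : glide GS s -> glide GS (signed s b).
Proof. destruct b; simpl; auto using glide_inv. Qed.

Lemma signed_indep s t b c : indep GS s t -> indep GS (signed s b) (signed t c).
Proof. intros H; destruct b, c; simpl; auto using indep_invl, indep_sym. Qed.

Lemma signed_indep_eq s t b c : indep GS s t -> signed s b = signed t c -> s = t /\ b = c.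
Proof.
  intros Hi H; pose proof (indep_prod_neq1 _ _ _ Hi) as Hn.
  destruct b, c; simpl in H; auto.
  - subst; exfalso; apply Hn, gmulVl.
  - subst; exfalso; apply Hn, gmulVr.
  - split; auto; rewrite <- (ginv_involutive s), H, ginv_involutive; auto.
Qed.

Lemma pair_cubic s t : indep GS s t -> s <> t -> cubic GS [s; t].
Proof.
  intros Hst Hne; apply Hreg; destruct (indep_glide _ _ _ Hst) as [Gs Gt].
  split; [|split].
  - constructor; [intros [H|[]]; auto | constructor; [intros [] | constructor]].
  - intros x [<-|[<-|[]]]; auto.
  - intros x y [<-|[<-|[]]] [<-|[<-|[]]] Hxy; auto using indep_sym; congruence.
Qed.

(* Two consecutive edges V - B - C with commuting letters span a square of
   X_G (unless they are the same letter twice); its other two sides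
   V - B' - C carry the same letters in the opposite order. *)
Lemma square_lift V B C : commuting GS (label V B) (label B C) ->
  exists B', edge GS V B' /\ edge GS B' C /\
    label V B' = label B C /\ label B' C = label V B /\
    forall u x, htpy GS (u ++ V :: B :: C :: x) (u ++ V :: B' :: C :: x).
Proof.
  unfold commuting; destruct (label V B) as [s b] eqn:E1, (label B C) as [t c] eqn:E2.
  simpl; intros Hst; destruct (indep_glide _ _ _ Hst) as [Gs Gt].
  apply label_spec in E1 as [Hd1 ->]; apply label_spec in E2 as [Hd2 ->].
  assert (Hedge : forall r e W, glide GS r -> edge GS W (gmul (signed r e) W))
    by (intros; unfold edge; rewrite gmulK; apply signed_glide; auto).
  destruct (classic (signed s b = signed t c)) as [Eq|Ne].
  { destruct (signed_indep_eq _ _ _ _ Hst Eq) as [<- <-].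
    exists (gmul (signed s b) V); repeat split; auto using htpy_refl.
    all: apply label_spec; auto. }
  assert (Hcub : cubic GS [signed s b; signed t c])
    by (apply pair_cubic; auto using signed_indep).
  destruct Hor as (_ & _ & Hsq); destruct (Hsq V _ _ Hcub) as [H1 H2].
  assert (Ecomm : gmul (signed t c) (gmul (signed s b) V) =
                  gmul (signed s b) (gmul (signed t c) V))
    by (rewrite !gmulA, (indep_comm _ _ _ (signed_indep _ _ b c Hst)); auto).
  exists (gmul (signed t c) V); rewrite Ecomm in *; repeat split; auto.
  - apply label_spec; split; auto; rewrite H2; auto.
  - apply label_spec; split; auto; rewrite <- H1; auto.
  - intros u x; apply htpy_square; auto.
Qed.

Lemma backtrack V B C : label B C = inverse (label V B) -> C = V.
Proof.
  destruct (label V B) as [s b] eqn:E; apply label_spec in E as [_ ->].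
  intros H; apply label_spec in H as [_ ->]; apply signed_cancel.
Qed.

Lemma lift_reduce_step w w' : reduce_step GS w w' -> forall A l, epath GS A l ->
  mu dir A l = w ->
  exists l', epath GS A l' /\ mu dir A l' = w' /\ htpy GS (A :: l) (A :: l').
Proof.
  intros Hs A l Hp <-.
  (* both kinds of step act at two consecutive positions [k], [k+1] *)
  assert (Hk : exists k, k + 1 < length (mu dir A l) /\
    (w' = swap_at dummy k (mu dir A l) /\
       commuting GS (nth k (mu dir A l) dummy) (nth (k + 1) (mu dir A l) dummy) \/
     w' = del2 dummy k (k + 1) (mu dir A l) /\
       nth (k + 1) (mu dir A l) dummy = inverse (nth k (mu dir A l) dummy))).
  { destruct Hs as [(k & [Hk Hc] & ->) | (k & (_ & Hk & Hinv & _) & ->)]; eauto. }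
  destruct Hk as (k & Hk & Hstep); rewrite mu_length in Hk.
  destruct (split_pair k l Hk) as (l1 & B & C & l2 & -> & <-).
  set (V := last l1 A); apply epath_app in Hp as [Hp1 (HVB & _ & Hp2)]; fold V in HVB.
  assert (Hw : mu dir A (l1 ++ B :: C :: l2) =
               mu dir A l1 ++ label V B :: label B C :: mu dir C l2)
    by (rewrite mu_app; reflexivity).
  rewrite Hw, <- (mu_length A l1), nth_pair_fst, nth_pair_snd in Hstep.
  rewrite (cons_app_last A l1); fold V.
  destruct Hstep as [[-> Hc] | [-> Hinv]].
  - destruct (square_lift V B C Hc) as (B' & HVB' & HB'C & E1 & E2 & Hsq).
    exists (l1 ++ B' :: C :: l2); split; [|split].
    + apply epath_app; fold V; repeat split; auto.
    + rewrite mu_app, swap_at_app, !mu_cons; fold V; rewrite E1, E2; reflexivity.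
    + rewrite (cons_app_last A l1); fold V; apply Hsq.
  - rewrite (backtrack V B C Hinv) in Hp2 |- *.
    exists (l1 ++ l2); split; [|split].
    + apply epath_app; fold V; auto.
    + rewrite mu_app, del2_app; reflexivity.
    + rewrite (cons_app_last A l1); fold V; apply htpy_back; auto.
Qed.

Lemma lift_reduces w w' : reduces GS w w' -> forall A l, epath GS A l -> mu dir A l = w ->
  exists l', epath GS A l' /\ mu dir A l' = w' /\ htpy GS (A :: l) (A :: l').
Proof.
  induction 1 as [w w' Hs | w | w1 w2 w3 _ IH1 _ IH2]; intros A l Hp Hm.
  - eapply lift_reduce_step; eauto.
  - exists l; repeat split; auto using htpy_refl.
  - destruct (IH1 A l Hp Hm) as (l1 & H1 & H2 & H3).
    destruct (IH2 A l1 H1 H2) as (l2 & H4 & H5 & H6).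
    exists l2; repeat split; auto; eapply htpy_trans; eauto.
Qed.

End Lifting.

Theorem corollary5p5 (G : Group) (GS : GlidingSystem G)
  (Hreg : regular GS) (Hbd : bounded_indep GS)
  (dir : G -> G -> bool) (Hor : orientation GS dir) :
  forall (A : G) (l1 l2 : list G),
    eloop GS A l1 -> eloop GS A l2 ->
    raag_eq GS (mu dir A l1) (mu dir A l2) ->
    htpy GS (A :: l1) (A :: l2).
Proof.
  intros A l1 l2 [Hp1 _] [Hp2 _] Hr.
  destruct (raag_eq_joinable G GS _ _ Hr) as (v & Hv1 & Hv2).
  destruct (lift_reduces G GS dir Hreg Hor _ _ Hv1 A l1 Hp1 eq_refl)
    as (m1 & _ & Hm1 & Hh1).
  destruct (lift_reduces G GS dir Hreg Hor _ _ Hv2 A l2 Hp2 eq_refl)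
    as (m2 & _ & Hm2 & Hh2).
  rewrite <- Hm2 in Hm1; apply mu_injective in Hm1; subst m2.
  eapply htpy_trans; [exact Hh1 | apply htpy_sym; exact Hh2].
Qed.
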